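(* Consider the GNEP described below, and let $\bar x$ be a KKT point of the associated Feasibility GNEP. Assume that the GNEP satisfies GNEP-EMFCQ in $\bar x$ (with respect to the constraint functions $c^\nu=(g^\nu,h^\nu)$). Then $g^\nu(\bar x)\le 0$ for every $\nu$, i.e. $\bar x$ is feasible for the GNEP; in particular, $\bar x$ is a solution of the Feasibility GNEP.
   Context: GNEP: $N$ players, variables $x=(x^1,\ldots,x^N)\in\mathbb{R}^n$, $x^\nu\in\mathbb{R}^{n_\nu}$. Player $\nu$ solves $\min_{x^\nu}\theta_\nu(x)$ s.t. $g^\nu(x)\le0$, $h^\nu(x)\le0$, with continuously differentiable $\theta_\nu:\mathbb{R}^n\to\mathbb{R}$, $g^\nu:\mathbb{R}^n\to\mathbb{R}^{m_\nu}$, $h^\nu:\mathbb{R}^n\to\mathbb{R}^{p_\nu}$. Notation: $v_+=\max\{0,v\}$ componentwise, $\nabla_{x^\nu}$ the partial (transposed) Jacobian w.r.t. $x^\nu$, $\min$ componentwise. Feasibility GNEP: player $\nu$ solves $\min_{x^\nu}\|g^\nu_+(x)\|^2$ s.t. $h^\nu(x)\le0$. $\bar x$ is a KKT point of it if for every $\nu$ there is $w^\nu\in\mathbb{R}^{p_\nu}$ with $\nabla_{x^\nu}\|g^\nu_+(\bar x)\|^2+\nabla_{x^\nu}h^\nu(\bar x)w^\nu=0$ and $\min\{-h^\nu(\bar x),w^\nu\}=0$. A solution of the Feasibility GNEP is a point $\bar x$ with $h^\nu(\bar x)\le 0$ and, for each $\nu$, $\|g^\nu_+(\bar x)\|^2\le\|g^\nu_+(x^\nu,\bar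 x^{-\nu})\|^2$ for all $x^\nu$ with $h^\nu(x^\nu,\bar x^{-\nu})\le0$. GNEP-EMFCQ at $x$: for every $\nu$ there is $d^\nu\in\mathbb{R}^{n_\nu}$ such that $\nabla_{x^\nu}c_i^\nu(x)^Td^\nu<0$ for every component $c_i^\nu$ of $c^\nu=(g^\nu,h^\nu)$ with $c_i^\nu(x)\ge0$. *)

From HB Require Import structures.
From mathcomp Require Import all_boot all_order all_algebra.
From mathcomp Require Import all_classical all_reals all_analysis.
Set Implicit Arguments. Unset Strict Implicit. Unset Printing Implicit Defensive.
Import Order.TTheory GRing.Theory Num.Theory.
Import numFieldNormedType.Exports.
Local Open Scope ring_scope.

Section GNEP.
Variables (R : realType) (n N : nat).
(* owner j = the player nu controlling coordinate j of x; the block x^nu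
   consists of the coordinates j with owner j = nu. *)
Variable owner : 'I_n -> 'I_N.

Definition unitv (j : 'I_n) : 'rV[R]_n := delta_mx 0 j.

Definition pd (f : 'rV[R]_n -> R) (x : 'rV[R]_n) (j : 'I_n) : R :=
  'D_(unitv j) f x.

Definition C1 (f : 'rV[R]_n -> R) : Prop :=
  (forall x, differentiable f x) /\ (forall j, continuous (fun x => pd f x j)).

Definition sqnorm_plus (q : nat) (f : 'I_q -> 'rV[R]_n -> R) (x : 'rV[R]_n) : R :=
  \sum_(i < q) (Num.max 0 (f i x)) ^+ 2.

Definition replace (x : 'rV[R]_n) (nu : 'I_N) (y : 'rV[R]_n) : 'rV[R]_n :=
  \row_j (if owner j == nu then y 0 j else x 0 j).

Unset Implicit Arguments.
Variables (m p : 'I_N -> nat).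
Variable g : forall nu : 'I_N, 'I_(m nu) -> 'rV[R]_n -> R.
Variable h : forall nu : 'I_N, 'I_(p nu) -> 'rV[R]_n -> R.

Definition feas_KKT (xb : 'rV[R]_n) : Prop :=
  forall nu : 'I_N, exists w : 'I_(p nu) -> R,
    (forall j : 'I_n, owner j = nu ->
       pd (@sqnorm_plus (m nu) (g nu)) xb j + \sum_(k < p nu) pd (h nu k) xb j * w k = 0)
    /\ (forall k, Num.min (- h nu k xb) (w k) = 0).

Definition feas_solution (xb : 'rV[R]_n) : Prop :=
  (forall nu k, h nu k xb <= 0) /\
  forall nu (y : 'rV[R]_n), (forall k, h nu k (replace xb nu y) <= 0) ->
    @sqnorm_plus (m nu) (g nu) xb <= @sqnorm_plus (m nu) (g nu) (replace xb nu y).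

Definition GNEP_EMFCQ (x : 'rV[R]_n) : Prop :=
  forall nu : 'I_N, exists d : 'I_n -> R,
    (forall i, 0 <= g nu i x ->
       \sum_(j | owner j == nu) pd (g nu i) x j * d j < 0) /\
    (forall k, 0 <= h nu k x ->
       \sum_(j | owner j == nu) pd (h nu k) x j * d j < 0).
End GNEP.
Arguments feas_KKT {R n N} owner {m p} g h xb.
Arguments feas_solution {R n N} owner {m p} g h xb.
Arguments GNEP_EMFCQ {R n N} owner {m p} g h x.

From HB Require Import structures.
From mathcomp Require Import all_boot all_order all_algebra.
From mathcomp Require Import all_classical all_reals all_analysis.
From mathcomp Require Import ring lra.
Import Order.TTheory GRing.Theory Num.Theory.
Import numFieldNormedType.Exports.
Local Open Scope classical_set_scope.
Local Open Scope ring_scope.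

(* Contract the KKT stationarity condition of player nu with the EMFCQ
   direction d^nu.  Since the gradient of ||g_+||^2 is sum_i 2 (g_i)_+ grad g_i,
   this yields
     0 = sum_i 2 (g_i)_+ <grad g_i, d> + sum_k w_k <grad h_k, d>.
   Every term is nonpositive: (g_i)_+ > 0 forces <grad g_i, d> < 0 and w_k > 0
   forces h_k = 0, hence <grad h_k, d> < 0.  A violated constraint g_i > 0 would
   make one term strictly negative, so none exists; then ||g_+(xb)||^2 = 0 is a
   global minimum for every player. *)

Section MultiplierSigns.
Context {R : realDomainType}.

Lemma min_opp_eq0_compl {b w : R} :
  Num.min (- b) w = 0 -> [/\ 0 <= w, b <= 0 & b * w = 0].
Proof.
case: (leP (- b) w) => [bw|wb] e.
- have b0 : b = 0 by apply/oppr_inj; rewrite e oppr0.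
  by rewrite b0 mul0r lexx; rewrite b0 oppr0 in bw.
- by rewrite e lexx mulr0 -oppr_ge0 -e ltW.
Qed.

Lemma nonpos_of_multiplier_identity {q r : nat} {a A : 'I_q -> R}
    {b w B : 'I_r -> R} :
  (forall k, Num.min (- b k) (w k) = 0) ->
  (forall i, 0 <= a i -> A i < 0) ->
  (forall k, 0 <= b k -> B k < 0) ->
  \sum_(i < q) 2 * Num.max 0 (a i) * A i + \sum_(k < r) w k * B k = 0 ->
  forall i, a i <= 0.
Proof.
move=> compl slopeA slopeB sum0 i0; rewrite leNgt; apply/negP => a_pos.
have termA_le0 i : 2 * Num.max 0 (a i) * A i <= 0.
  case: (leP 0 (a i)) => ai; last by rewrite mulr0 mul0r.
  by rewrite mulr_ge0_le0 ?mulr_ge0 // ltW // slopeA.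
have termB_le0 k : w k * B k <= 0.
  have [w_ge0 _ bw0] := min_opp_eq0_compl (compl k).
  have [->|w_neq0] := eqVneq (w k) 0; first by rewrite mul0r.
  move: bw0 => /eqP; rewrite mulf_eq0 (negPf w_neq0) orbF => /eqP b0.
  by rewrite pmulr_rle0 ?lt_def ?w_neq0 // ltW // slopeB // b0.
have termA_lt0 : 2 * Num.max 0 (a i0) * A i0 < 0.
  by rewrite (max_r (ltW a_pos)) -mulrA pmulr_rlt0 // pmulr_rlt0 // slopeA // ltW.
have sumA_rest : \sum_(i < q | i != i0) 2 * Num.max 0 (a i) * A i <= 0.
  by rewrite -oppr_ge0 -sumrN; apply: sumr_ge0 => i _; rewrite oppr_ge0.
have sumB : \sum_(k < r) w k * B k <= 0.
  by rewrite -oppr_ge0 -sumrN; apply: sumr_ge0 => k _; rewrite oppr_ge0.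
by move: sum0; rewrite (bigD1 i0) //=; lra.
Qed.

End MultiplierSigns.

Section SquaredPositivePart.
Context {R : realType}.

Definition sqr_plus (t : R) : R := (Num.max 0 t) ^+ 2.

Lemma sqr_plus_taylor (t e : R) :
  `|sqr_plus (e + t) - sqr_plus t - 2 * Num.max 0 t * e| <= e ^+ 2.
Proof.
rewrite /sqr_plus; case: (leP 0 t) => t0; case: (leP 0 (e + t)) => et0.
- have -> : (e + t) ^+ 2 - t ^+ 2 - 2 * t * e = e ^+ 2 by ring.
  by rewrite ger0_norm ?sqr_ge0.
- by rewrite ler_norml; apply/andP; split; nra.
- by rewrite ler_norml; apply/andP; split; nra.
- by rewrite expr0n /= mulr0 mul0r !subrr normr0 sqr_ge0.
Qed.

Lemma sqr_plus_difference_quotient (t : R) :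
  (fun e : R => e^-1 *: ((sqr_plus \o shift t) (e *: 1) - sqr_plus t))
    @ 0^' --> 2 * Num.max 0 t.
Proof.
apply/cvgrPdist_le => eps eps_gt0; near=> e.
have e_neq0 : e != 0 by near: e; exact: nbhs_dnbhs_neq.
have e_small : `|e| <= eps by near: e; exact: dnbhs0_le.
rewrite /= [e *: 1]mulr1 /= [_ *: _]/(_ * _).
have -> : 2 * Num.max 0 t - e^-1 * (sqr_plus (e + t) - sqr_plus t) =
    - (e^-1 * (sqr_plus (e + t) - sqr_plus t - 2 * Num.max 0 t * e)) by field.
rewrite normrN normrM normrV ?unitfE // ler_pdivrMl ?normr_gt0 //.
apply: (le_trans (sqr_plus_taylor t e)).
by rewrite -[e ^+ 2]ger0_norm ?sqr_ge0 // normrX expr2 ler_wpM2l.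
Unshelve. all: by end_near. Qed.

Lemma derive1_sqr_plus (t : R) : 'D_1 sqr_plus t = 2 * Num.max 0 t.
Proof. exact: cvg_lim (sqr_plus_difference_quotient t). Qed.

Lemma differentiable_sqr_plus (t : R) : differentiable sqr_plus t.
Proof.
apply/derivable1_diffP/cvg_ex; exists (2 * Num.max 0 t).
exact: sqr_plus_difference_quotient.
Qed.

Context {n : nat}.

Lemma derive_sqr_plus_comp (f : 'rV[R]_n -> R) (x v : 'rV[R]_n) :
  differentiable f x ->
  'D_v (sqr_plus \o f) x = 2 * Num.max 0 (f x) * 'D_v f x.
Proof.
move=> df; have dsf := differentiable_sqr_plus (f x).
rewrite deriveE; last exact: differentiable_comp.
rewrite diff_comp // /= -(deriveE _ df) -[X in 'd sqr_plus _ X]mulr1 linearZ /=.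
by rewrite -deriveE // derive1_sqr_plus [_ *: _]mulrC.
Qed.

Lemma pd_sqnorm_plus (q : nat) (f : 'I_q -> 'rV[R]_n -> R) x j :
  (forall i, differentiable (f i) x) ->
  pd (sqnorm_plus f) x j = \sum_(i < q) 2 * Num.max 0 (f i x) * pd (f i) x j.
Proof.
move=> df.
have -> : sqnorm_plus f = \sum_(i < q) (sqr_plus \o f i).
  by apply/funext => y; rewrite fct_sumE.
rewrite /pd derive_sum => [|i]; last first.
  exact/diff_derivable/differentiable_comp/differentiable_sqr_plus.
by apply: eq_bigr => i _; rewrite derive_sqr_plus_comp.
Qed.

Lemma sqnorm_plus_ge0 (q : nat) (f : 'I_q -> 'rV[R]_n -> R) x :
  0 <= sqnorm_plus f x.
Proof. by apply: sumr_ge0 => i _; exact: sqr_ge0. Qed.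

Lemma sqnorm_plus_eq0 (q : nat) (f : 'I_q -> 'rV[R]_n -> R) x :
  (forall i, f i x <= 0) -> sqnorm_plus f x = 0.
Proof. by move=> fx; rewrite /sqnorm_plus big1 // => i _; rewrite max_l // expr0n. Qed.

End SquaredPositivePart.

Section BlockDerivative.
Context {R : realType} {n N : nat} (owner : 'I_n -> 'I_N).

Definition pd_block (nu : 'I_N) (f : 'rV[R]_n -> R) (x : 'rV[R]_n) (d : 'I_n -> R) :=
  \sum_(j | owner j == nu) pd f x j * d j.

Lemma pd_block_sqnorm_plus (q : nat) (f : 'I_q -> 'rV[R]_n -> R) nu x d :
  (forall i, differentiable (f i) x) ->
  pd_block nu (sqnorm_plus f) x d =
    \sum_(i < q) 2 * Num.max 0 (f i x) * pd_block nu (f i) x d.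
Proof.
move=> df; rewrite /pd_block.
under [RHS]eq_bigr => i _ do rewrite mulr_sumr.
rewrite [RHS]exchange_big /=; apply: eq_bigr => j _.
by rewrite pd_sqnorm_plus // mulr_suml; apply: eq_bigr => i _; rewrite mulrA.
Qed.

Lemma pd_block_stationary {r : nat} {F : 'rV[R]_n -> R} {G : 'I_r -> 'rV[R]_n -> R}
    {w : 'I_r -> R} {nu x} d :
  (forall j, owner j = nu -> pd F x j + \sum_(k < r) pd (G k) x j * w k = 0) ->
  pd_block nu F x d + \sum_(k < r) w k * pd_block nu (G k) x d = 0.
Proof.
move=> stat.
have -> : \sum_(k < r) w k * pd_block nu (G k) x d =
    \sum_(j | owner j == nu) (\sum_(k < r) pd (G k) x j * w k) * d j.
  under eq_bigr => k _ do rewrite mulr_sumr.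
  rewrite exchange_big /=; apply: eq_bigr => j _; rewrite mulr_suml.
  by apply: eq_bigr => k _; rewrite mulrCA mulrA.
rewrite /pd_block -big_split big1 // => j /eqP owner_j.
by rewrite /= -mulrDl stat // mul0r.
Qed.

End BlockDerivative.

Theorem theorem4p3 (R : realType) (n N : nat) (owner : 'I_n -> 'I_N)
  (m p : 'I_N -> nat)
  (theta : 'I_N -> 'rV[R]_n -> R)
  (g : forall nu : 'I_N, 'I_(m nu) -> 'rV[R]_n -> R)
  (h : forall nu : 'I_N, 'I_(p nu) -> 'rV[R]_n -> R)
  (Htheta : forall nu, C1 (theta nu))
  (Hg : forall nu i, C1 (g nu i))
  (Hh : forall nu k, C1 (h nu k))
  (xb : 'rV[R]_n)
  (HKKT : feas_KKT owner g h xb)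
  (HEMFCQ : GNEP_EMFCQ owner g h xb) :
  (forall nu i, g nu i xb <= 0) /\ feas_solution owner g h xb.
Proof.
have g_feasible nu : forall i, g nu i xb <= 0.
  have [w [stat compl]] := HKKT nu; have [d [slope_g slope_h]] := HEMFCQ nu.
  pose slope (f : 'rV[R]_n -> R) := pd_block owner nu f xb d.
  apply: (nonpos_of_multiplier_identity (A := slope \o g nu) (B := slope \o h nu)
            compl slope_g slope_h).
  have := pd_block_stationary owner d stat.
  by rewrite pd_block_sqnorm_plus // => i; case: (Hg nu i).
split=> //; split=> [nu k | nu y _].
  by have [w [_ compl]] := HKKT nu; have [] := min_opp_eq0_compl (compl k).
by rewrite sqnorm_plus_eq0 // sqnorm_plus_ge0.
Qed.
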